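(* Let $n\ge0$ and $m\ge n+2$. Then for all formulas $\alpha$ and $\beta$, $\neg\circ^m\alpha\vdash_{L_n^{n+1}}\beta$.
   Context: Formulas are built from a countable set of propositional variables using unary $\neg,\circ$ and binary $\land,\lor,\to$; $\circ^0\alpha=\alpha$, $\circ^{m+1}\alpha=\circ(\circ^m\alpha)$, $\alpha\leftrightarrow\beta:=(\alpha\to\beta)\land(\beta\to\alpha)$. mbC is the Hilbert calculus with the axiom schemas of a standard axiomatization of positive classical propositional logic in $\land,\lor,\to$, plus (TND) $\alpha\lor\neg\alpha$ and (bc1) $\circ\alpha\to(\alpha\to(\neg\alpha\to\beta))$, modus ponens being the only rule; mbCciw is mbC plus (ciw) $\circ\alpha\lor(\alpha\land\neg\alpha)$. For $n\ge0$, $k\ge1$, $L_n^k$ is mbCciw plus (cc$^n$) $\circ^{n+2}\alpha$, (dn) $\neg\neg\alpha\leftrightarrow\alpha$, and (ip$^j$) $\neg\circ^j\neg\alpha\leftrightarrow\neg\circ^j\alpha$ for each $1\le j<k$. $\Gamma\vdash_L\alpha$ denotes derivability of $\alpha$ from $\Gamma$ in $L$. *)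

Inductive form : Type :=
| Var  : nat -> form
| Neg  : form -> form
| Circ : form -> form
| And  : form -> form -> form
| Or   : form -> form -> form
| Imp  : form -> form -> form.

Fixpoint circ_iter (m : nat) (a : form) : form :=
  match m with
  | O => a
  | S m' => Circ (circ_iter m' a)
  end.

Definition Iff (a b : form) : form := And (Imp a b) (Imp b a).

(* Standard axiomatization of positive classical logic (as used for mbC,
   Carnielli--Coniglio), plus (TND) and (bc1): the axioms of mbC. *)
Inductive mbC_ax : form -> Prop :=
| Ax1 : forall a b, mbC_ax (Imp a (Imp b a))
| Ax2 : forall a b c, mbC_ax (Imp (Imp a b) (Imp (Imp a (Imp b c)) (Imp a c)))
| Ax3 : forall a b, mbC_ax (Imp a (Imp b (And a b)))
| Ax4 : forall a b, mbC_ax (Imp (And a b) a)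
| Ax5 : forall a b, mbC_ax (Imp (And a b) b)
| Ax6 : forall a b, mbC_ax (Imp a (Or a b))
| Ax7 : forall a b, mbC_ax (Imp b (Or a b))
| Ax8 : forall a b c, mbC_ax (Imp (Imp a c) (Imp (Imp b c) (Imp (Or a b) c)))
| Ax9 : forall a b, mbC_ax (Or a (Imp a b))
| TND : forall a, mbC_ax (Or a (Neg a))
| bc1 : forall a b, mbC_ax (Imp (Circ a) (Imp a (Imp (Neg a) b))).

Inductive L_ax (n k : nat) : form -> Prop :=
| L_mbC : forall a, mbC_ax a -> L_ax n k a
| L_ciw : forall a, L_ax n k (Or (Circ a) (And a (Neg a)))
| L_cc  : forall a, L_ax n k (circ_iter (n + 2) a)
| L_dn  : forall a, L_ax n k (Iff (Neg (Neg a)) a)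
| L_ip  : forall j a, 1 <= j -> j < k ->
    L_ax n k (Iff (Neg (circ_iter j (Neg a))) (Neg (circ_iter j a))).

Inductive derivable (Ax : form -> Prop) (Gamma : form -> Prop) : form -> Prop :=
| d_prem : forall a, Gamma a -> derivable Ax Gamma a
| d_ax   : forall a, Ax a -> derivable Ax Gamma a
| d_mp   : forall a b, derivable Ax Gamma a -> derivable Ax Gamma (Imp a b) ->
    derivable Ax Gamma b.

Definition L_derives (n k : nat) (Gamma : form -> Prop) (a : form) : Prop :=
  derivable (L_ax n k) Gamma a.

(* For m >= n + 2 both ∘^m α and ∘(∘^m α) = ∘^(m+1) α are instances of (cc^n),
   so the premise ¬∘^m α makes ∘^m α explosive by (bc1). *)

From Stdlib Require Import Lia.

Lemma circ_iter_add (p q : nat) (a : form) :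
  circ_iter (p + q) a = circ_iter p (circ_iter q a).
Proof.
  induction p as [|p IH]; simpl; [reflexivity | now rewrite IH].
Qed.

Lemma L_ax_circ_iter (n k j : nat) (a : form) :
  n + 2 <= j -> L_ax n k (circ_iter j a).
Proof.
  intros Hj.
  replace j with ((n + 2) + (j - (n + 2))) by lia.
  rewrite circ_iter_add.
  apply L_cc.
Qed.

Lemma derivable_bc1 (Ax Gamma : form -> Prop) (a b : form) :
  (forall c, mbC_ax c -> Ax c) ->
  derivable Ax Gamma (Circ a) -> derivable Ax Gamma a ->
  derivable Ax Gamma (Neg a) -> derivable Ax Gamma b.
Proof.
  intros HmbC Hcirc Ha Hneg.
  apply (d_mp _ _ _ _ Hneg).
  apply (d_mp _ _ _ _ Ha).
  apply (d_mp _ _ _ _ Hcirc).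
  apply d_ax, HmbC, bc1.
Qed.

Lemma L_derives_neg_circ_iter_explosive (n k m : nat) (a b : form) :
  n + 2 <= m -> L_derives n k (fun g => g = Neg (circ_iter m a)) b.
Proof.
  intros Hm.
  apply derivable_bc1 with (a := circ_iter m a).
  - exact (L_mbC n k).
  - apply d_ax; change (Circ (circ_iter m a)) with (circ_iter (S m) a).
    apply L_ax_circ_iter; lia.
  - apply d_ax, L_ax_circ_iter; exact Hm.
  - now apply d_prem.
Qed.

Theorem lemma3 : forall (n m : nat), n + 2 <= m ->
  forall (a b : form),
    L_derives n (n + 1) (fun g => g = Neg (circ_iter m a)) b.
Proof.
  intros n m Hm a b.
  exact (L_derives_neg_circ_iter_explosive n (n + 1) m a b Hm).
Qed.
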